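(* Let $\{m_k:k\ge0\}$ be positive reals with $\sum_k m_k=\infty$ and $m_k\to0$; let $S_0=0$ and $S_{k+1}=\sum_{i=0}^k m_i$. Define $f_j:(S_j,S_{j+1}]\to\mathbb{R}$, $j\ge0$, recursively with $c_0=0$ and $c_j=f_{j-1}(S_j)$ for $j\ge1$, by $$f_j(x)=\begin{cases}-x+S_j+c_j & x\in(S_j,S_j+\tfrac{m_j}{16})\\ \tfrac{8}{m_j}(x-S_j-\tfrac{m_j}{8})^2-\tfrac{3m_j}{32}+c_j & x\in[S_j+\tfrac{m_j}{16},S_j+\tfrac{3m_j}{16})\\ -\tfrac{5m_j}{16}\exp\!\big(\tfrac{5m_j/16}{x-S_j-m_j/2}+1\big)+\tfrac{m_j}{4}+c_j & x\in[S_j+\tfrac{3m_j}{16},S_j+\tfrac{m_j}{2})\\ \tfrac{m_j}{4}+c_j & x=S_j+\tfrac{m_j}{2}\\ \tfrac{5m_j}{16}\exp\!\big(\tfrac{-5m_j/16}{x-S_j-m_j/2}+1\big)+\tfrac{m_j}{4}+c_j & x\in(S_j+\tfrac{m_j}{2},S_j+\tfrac{13m_j}{16})\\ -\tfrac{8}{m_j}(x-S_j-\tfrac{7m_j}{8})^2+\tfrac{19m_j}{32}+c_j & x\in[S_j+\tfrac{13m_j}{16},S_j+\tfrac{15m_j}{16})\\ -x+S_j+\tfrac{3m_j}{2}+c_j & x\in[S_j+\tfrac{15m_j}{16},S_{j+1}],\end{cases}$$ and define $F:\mathbb{R}\to\mathbb{R}$ by $F(x)=-x$ for $x\le0$ and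 $F(x)=f_j(x)$ for $x\in(S_j,S_{j+1}]$, $j\ge0$. Then $F$ is continuous and differentiable on $\mathbb{R}$, is bounded from below, and its derivative $\dot F$ is locally Lipschitz continuous. Moreover, $F(S_j)=S_j/2$ and $\dot F(S_j)=-1$ for all $j\ge0$. *)

From Stdlib Require Import Reals ClassicalEpsilon.
From Coquelicot Require Import Coquelicot.
Open Scope R_scope.

Fixpoint Ssum (m : nat -> R) (k : nat) : R :=
  match k with
  | O => 0
  | Datatypes.S k' => Ssum m k' + m k'
  end.

(* The piece f_j on (S_j, S_{j+1}], with parameters Sj = S_j, mj = m_j,
   cj = c_j.  (Values outside (S_j, S_{j+1}] are irrelevant.) *)
Definition fpiece (Sj mj cj x : R) : R :=
  if Rlt_dec x (Sj + mj / 16) then - x + Sj + cj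
  else if Rlt_dec x (Sj + 3 * mj / 16) then
    8 / mj * (x - Sj - mj / 8) ^ 2 - 3 * mj / 32 + cj
  else if Rlt_dec x (Sj + mj / 2) then
    - (5 * mj / 16) * exp ((5 * mj / 16) / (x - Sj - mj / 2) + 1) + mj / 4 + cj
  else if Req_EM_T x (Sj + mj / 2) then mj / 4 + cj
  else if Rlt_dec x (Sj + 13 * mj / 16) then
    (5 * mj / 16) * exp ((- (5 * mj / 16)) / (x - Sj - mj / 2) + 1) + mj / 4 + cj
  else if Rlt_dec x (Sj + 15 * mj / 16) then
    - (8 / mj) * (x - Sj - 7 * mj / 8) ^ 2 + 19 * mj / 32 + cj
  else - x + Sj + 3 * mj / 2 + cj.

Definition fj (m : nat -> R) (j : nat) (cj x : R) : R :=
  fpiece (Ssum m j) (m j) cj x.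

Fixpoint cseq (m : nat -> R) (j : nat) : R :=
  match j with
  | O => 0
  | Datatypes.S j' => fj m j' (cseq m j') (Ssum m j)
  end.

Definition Fbig (m : nat -> R) (x : R) : R :=
  if Rle_dec x 0 then - x
  else
    let j := epsilon (inhabits O)
               (fun j => Ssum m j < x <= Ssum m (Datatypes.S j)) in
    fj m j (cseq m j) x.

From Stdlib Require Import Reals Lra Psatz ClassicalEpsilon.
From Coquelicot Require Import Coquelicot.
Open Scope R_scope.

(* On each interval, F is a rescaled copy of one fixed profile P on [0, 1]:
   F(x) = S_j/2 + m_j P((x - S_j)/m_j).  P has slope -1 near both ends, so
   consecutive copies coincide (with 3 S_{j+1}/2 - x) on a neighbourhood of
   S_{j+1}; thus near any point F is a single rescaled profile, and
   F' = P'((x - S_j)/m_j).  P is C^1 with P' globally Lipschitz, because its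
   exponential branches use t |-> e^{1 - a/t}, whose first two derivatives
   are bounded on t > 0 and vanish at 0+.  So F' is Lipschitz with constant
   Lip(P')/m_j on each piece, and a bounded set meets finitely many pieces.
   Finally P >= -1/8 on [0, 1] and (m_j) is bounded, so F is bounded below. *)

Lemma is_derive_on_interval (f g : R -> R) (a b : Rbar) (x l : R) :
  Rbar_lt a x -> Rbar_lt x b -> (forall y : R, Rbar_lt a y -> Rbar_lt y b -> g y = f y) ->
  is_derive g x l -> is_derive f x l.
Proof.
intros Ha Hb E. apply is_derive_ext_loc, (locally_interval _ x a b); auto.
Qed.

Lemma is_derive_glue (f g1 g2 : R -> R) x d l : 0 < d ->
  (forall y, x - d < y < x -> f y = g1 y) ->
  (forall y, x <= y < x + d -> f y = g2 y) -> g1 x = g2 x ->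
  is_derive g1 x l -> is_derive g2 x l -> is_derive f x l.
Proof.
intros Hd E1 E2 E12 D1 D2. rewrite is_derive_Reals in *.
intros eps He.
destruct (D1 eps He) as [[d1 Hd1] L1], (D2 eps He) as [[d2 Hd2] L2]; simpl in *.
assert (Hmin : 0 < Rmin d (Rmin d1 d2)) by (repeat apply Rmin_pos; lra).
exists (mkposreal _ Hmin); simpl. intros h hne hlt.
assert (Rmin d (Rmin d1 d2) <= d) by apply Rmin_l.
assert (Rmin d (Rmin d1 d2) <= d1) by (eapply Rle_trans; [apply Rmin_r | apply Rmin_l]).
assert (Rmin d (Rmin d1 d2) <= d2) by (eapply Rle_trans; [apply Rmin_r | apply Rmin_r]).
apply Rabs_def2 in hlt as Hh.
rewrite (E2 x) by lra.
destruct (Rlt_or_le h 0) as [hn|hp].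
- rewrite E1, <- E12 by lra. apply L1; auto; lra.
- rewrite E2 by lra. apply L2; auto; lra.
Qed.

Lemma is_derive_if (g h dg dh : R -> R) b :
  (forall v, is_derive g v (dg v)) -> (forall v, is_derive h v (dh v)) ->
  g b = h b -> dg b = dh b ->
  forall u, is_derive (fun v => if Rlt_dec v b then g v else h v) u
                      (if Rlt_dec u b then dg u else dh u).
Proof.
intros Dg Dh Eb Edb u.
destruct (Rtotal_order u b) as [Hu|[Hu|Hu]].
- destruct (Rlt_dec u b); [|lra].
  apply (is_derive_on_interval _ g m_infty b); simpl; auto.
  intros y _ Hy. destruct (Rlt_dec y b); [reflexivity|lra].
- subst u. destruct (Rlt_dec b b); [lra|].
  apply (is_derive_glue _ g h b 1); auto.
  + lra.
  + intros y Hy. destruct (Rlt_dec y b); [reflexivity|lra].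
  + intros y Hy. destruct (Rlt_dec y b); [lra|reflexivity].
  + rewrite <- Edb. auto.
- destruct (Rlt_dec u b); [lra|].
  apply (is_derive_on_interval _ h b p_infty); simpl; auto.
  intros y Hy _. destruct (Rlt_dec y b); [lra|reflexivity].
Qed.

Lemma is_derive_0_of_sq_bound (f : R -> R) C :
  (forall t, Rabs (f t) <= C * t ^ 2) -> is_derive f 0 0.
Proof.
intros Hf. rewrite is_derive_Reals.
assert (f0 : f 0 = 0).
{ specialize (Hf 0). apply Rabs_le_between in Hf. lra. }
pose proof (Rabs_pos C) as C0.
intros eps He.
assert (Hd : 0 < eps / (Rabs C + 1)) by (apply Rdiv_lt_0_compat; lra).
exists (mkposreal _ Hd); simpl. intros h hne hlt.
apply Rlt_div_r in hlt; [|lra].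
assert (Hh : 0 < Rabs h) by (apply Rabs_pos_lt; auto).
assert (Hfh : Rabs (f h) <= Rabs C * Rabs h * Rabs h).
{ eapply Rle_trans; [apply Hf|]. rewrite Rmult_assoc, <- Rabs_mult.
  replace (h ^ 2) with (Rabs (h * h)) by (rewrite Rabs_right; [ring | apply Rle_ge, Rle_0_sqr]).
  apply Rmult_le_compat_r; [apply Rabs_pos | apply Rle_abs]. }
replace ((f (0 + h) - f 0) / h - 0) with (f h / h) by (rewrite Rplus_0_l, f0; field; auto).
unfold Rdiv. rewrite Rabs_mult, Rabs_inv.
apply (Rmult_lt_reg_r (Rabs h)); [lra|].
rewrite Rmult_assoc, Rinv_l, Rmult_1_r by lra.
nra.
Qed.

Definition lipschitz_on (P : R -> Prop) (g : R -> R) (K : R) :=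
  forall y z, P y -> P z -> Rabs (g y - g z) <= K * Rabs (y - z).

Lemma lipschitz_on_glue (A B : R -> Prop) g K b :
  (forall y, A y -> y <= b) -> (forall z, B z -> b <= z) -> A b -> B b ->
  lipschitz_on A g K -> lipschitz_on B g K -> lipschitz_on (fun y => A y \/ B y) g K.
Proof.
intros HA HB Ab Bb LA LB.
assert (Across : forall y z, A y -> B z -> Rabs (g y - g z) <= K * Rabs (y - z)).
{ intros y z Ay Bz.
  specialize (HA y Ay). specialize (HB z Bz).
  specialize (LA y b Ay Ab). specialize (LB b z Bb Bz).
  rewrite (Rabs_left1 (y - b)) in LA by lra.
  rewrite (Rabs_left1 (b - z)) in LB by lra.
  rewrite (Rabs_left1 (y - z)) by lra.
  replace (g y - g z) with ((g y - g b) + (g b - g z)) by ring.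
  eapply Rle_trans; [apply Rabs_triang | lra]. }
intros y z [Ay|By] [Az|Bz]; auto.
rewrite Rabs_minus_sym, (Rabs_minus_sym y). auto.
Qed.

Lemma lipschitz_on_weaken (A B : R -> Prop) g K K' :
  (forall y, B y -> A y) -> K <= K' -> lipschitz_on A g K -> lipschitz_on B g K'.
Proof.
intros HBA HK L y z By Bz. eapply Rle_trans; [apply L; auto|].
apply Rmult_le_compat_r; [apply Rabs_pos | exact HK].
Qed.

Lemma lipschitz_on_ext (A : R -> Prop) g g' K :
  (forall y, A y -> g y = g' y) -> lipschitz_on A g' K -> lipschitz_on A g K.
Proof. intros E L y z Ay Az. rewrite !E; auto. Qed.

Lemma lipschitz_on_if (g h : R -> R) K b :
  lipschitz_on (fun _ => True) g K -> lipschitz_on (fun _ => True) h K -> g b = h b ->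
  lipschitz_on (fun _ => True) (fun v => if Rlt_dec v b then g v else h v) K.
Proof.
intros Lg Lh Eb.
apply (lipschitz_on_weaken (fun y => y <= b \/ b <= y) _ _ K); [intros; lra | lra |].
apply (lipschitz_on_glue _ _ _ _ b); try (intros; lra).
- apply (lipschitz_on_ext _ _ g); [|intros y z _ _; auto].
  intros y Hy. destruct (Rlt_dec y b); [reflexivity|]. replace y with b by lra. auto.
- apply (lipschitz_on_ext _ _ h); [|intros y z _ _; auto].
  intros y Hy. destruct (Rlt_dec y b); [lra|reflexivity].
Qed.

Lemma lipschitz_on_affine (P : R -> Prop) c a K :
  Rabs c <= K -> lipschitz_on P (fun v => c * (v - a)) K.
Proof.
intros Hc y z _ _. replace (c * (y - a) - c * (z - a)) with (c * (y - z)) by ring.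
rewrite Rabs_mult. apply Rmult_le_compat_r; [apply Rabs_pos | exact Hc].
Qed.

Lemma lipschitz_on_const (P : R -> Prop) c K : 0 <= K -> lipschitz_on P (fun _ => c) K.
Proof.
intros HK y z _ _. rewrite Rminus_diag, Rabs_R0. apply Rmult_le_pos; [exact HK | apply Rabs_pos].
Qed.

Lemma lipschitz_of_derive_bound (f df : R -> R) K :
  (forall x, is_derive f x (df x)) -> (forall x, Rabs (df x) <= K) ->
  lipschitz_on (fun _ => True) f K.
Proof.
intros Df Bd y z _ _.
destruct (MVT_gen f z y df) as [c [_ E]].
- intros x _. apply Df.
- intros x _. apply continuity_pt_filterlim, (ex_derive_continuous (V := R_NormedModule)).
  eexists; apply Df.
- rewrite E, Rabs_mult. apply Rmult_le_compat_r; [apply Rabs_pos | apply Bd].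
Qed.

Definition cutoff (g : R -> R) (t : R) : R := if Rlt_dec 0 t then g t else 0.

Lemma is_derive_cutoff (g dg : R -> R) C t :
  (forall s, 0 < s -> is_derive g s (dg s)) ->
  (forall s, 0 < s -> Rabs (g s) <= C * s ^ 2) ->
  is_derive (cutoff g) t (cutoff dg t).
Proof.
intros Dg Bg. unfold cutoff at 2.
destruct (Rlt_dec 0 t) as [Ht|Ht].
- apply (is_derive_on_interval _ g 0 p_infty); simpl; auto.
  intros y Hy _. unfold cutoff. destruct (Rlt_dec 0 y); [reflexivity|lra].
- destruct (Rle_lt_or_eq_dec t 0) as [Hlt|Heq]; [lra| |].
  + apply (is_derive_on_interval _ (fun _ => 0) m_infty 0); simpl; auto.
    * intros y _ Hy. unfold cutoff. destruct (Rlt_dec 0 y); [lra|reflexivity].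
    * auto_derive; reflexivity.
  + subst t. apply (is_derive_0_of_sq_bound _ C). intros s. unfold cutoff.
    destruct (Rlt_dec 0 s) as [Hs|Hs]; auto.
    rewrite Rabs_R0. specialize (Bg 1 Rlt_0_1). pose proof (Rabs_pos (g 1)).
    pose proof (pow2_ge_0 s). nra.
Qed.

Lemma poly_le_exp s : 0 <= s -> s ^ 2 <= 150 * exp s /\ s ^ 4 + 2 * s ^ 3 <= 150 * exp s.
Proof.
intros Hs.
assert (E : exp s = exp (s / 5) ^ 5).
{ replace s with (s/5 + (s/5 + (s/5 + (s/5 + s/5)))) at 1 by field.
  rewrite !exp_plus. ring. }
assert (Hpow : (1 + s / 5) ^ 5 <= exp (s / 5) ^ 5)
  by (apply pow_incr; pose proof (exp_ineq1_le (s / 5)); lra).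
rewrite E.
assert (0 <= s ^ 2) by (apply pow_le; lra).
assert (0 <= s ^ 3) by (apply pow_le; lra).
assert (0 <= s ^ 4) by (apply pow_le; lra).
assert (0 <= s ^ 5) by (apply pow_le; lra).
replace ((1 + s / 5) ^ 5) with (1 + s + 2 * s^2 / 5 + 2 * s^3 / 25 + s^4 / 125 + s^5 / 3125)
  in Hpow by field.
split; lra.
Qed.

Definition flat (t : R) : R := 5/16 * exp (1 - 5/16 / t).
Definition dflat (t : R) : R := (5/16 / t) ^ 2 * exp (1 - 5/16 / t).
Definition ddflat (t : R) : R :=
  exp (1 - 5/16 / t) * ((5/16) ^ 3 / t ^ 4 - 2 * (5/16) ^ 2 / t ^ 3).

(* 1536 e = 150 e (16/5)^2: the bounds of [flat_bounds] reduce to [poly_le_exp]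
   after the substitution s = (5/16)/t. *)
Definition Cphi : R := 1536 * exp 1.

Lemma Cphi_ge_16 : 16 <= Cphi.
Proof. unfold Cphi. pose proof (exp_ineq1_le 1). lra. Qed.

Lemma flat_bounds t : 0 < t ->
  Rabs (flat t) <= Cphi * t ^ 2 /\ Rabs (dflat t) <= Cphi * t ^ 2 /\ Rabs (ddflat t) <= Cphi.
Proof.
intros Ht. set (s := 5/16 / t).
assert (Hs : 0 < s) by (apply Rdiv_lt_0_compat; lra).
replace t with (5/16 / s) by (unfold s; field; lra).
unfold flat, dflat, ddflat. replace (5/16 / (5/16 / s)) with s by (field; lra).
assert (Ee : exp (1 - s) = exp 1 / exp s) by (unfold Rminus, Rdiv; rewrite exp_plus, exp_Ropp; ring).
rewrite Ee. unfold Cphi.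
destruct (poly_le_exp s) as [P2 P4]; [lra|].
pose proof (exp_pos 1) as He. pose proof (exp_pos s) as HE.
set (e := exp 1) in *. set (E := exp s) in *.
assert (HsE : 0 < E * s ^ 2) by (apply Rmult_lt_0_compat; [lra | apply pow_lt; lra]).
repeat split.
- replace (5/16 * (e / E)) with (5/16 * e * s ^ 2 / (E * s ^ 2)) by (field; lra).
  replace (1536 * e * (5/16 / s) ^ 2) with (150 * e * E / (E * s ^ 2)) by (field; lra).
  rewrite Rabs_right by (apply Rle_ge, Rdiv_le_0_compat; [pose proof (pow2_ge_0 s) |]; nra).
  apply Rmult_le_compat_r; [left; apply Rinv_0_lt_compat; lra | nra].
- replace (s ^ 2 * (e / E)) with (e * s ^ 4 / (E * s ^ 2)) by (field; lra).
  replace (1536 * e * (5/16 / s) ^ 2) with (150 * e * E / (E * s ^ 2)) by (field; lra).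
  assert (0 <= s ^ 3) by (apply pow_le; lra). assert (0 <= s ^ 4) by (apply pow_le; lra).
  rewrite Rabs_right by (apply Rle_ge, Rdiv_le_0_compat; nra).
  apply Rmult_le_compat_r; [left; apply Rinv_0_lt_compat; lra | nra].
- replace (e / E * ((5/16) ^ 3 / (5/16 / s) ^ 4 - 2 * (5/16) ^ 2 / (5/16 / s) ^ 3))
    with (16/5 * e * (s ^ 4 - 2 * s ^ 3) / E) by (field; lra).
  unfold Rdiv. rewrite Rabs_mult, Rabs_mult, Rabs_right, (Rabs_right (/ E)) by
    (apply Rle_ge; try (left; apply Rinv_0_lt_compat); lra).
  apply (Rmult_le_reg_r E); [lra|]. rewrite Rmult_assoc, Rinv_l by lra.
  assert (0 <= s ^ 3) by (apply pow_le; lra). assert (0 <= s ^ 4) by (apply pow_le; lra).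
  assert (Rabs (s ^ 4 - 2 * s ^ 3) <= 150 * E) by (apply Rabs_le; lra).
  nra.
Qed.

Lemma is_derive_flat t : 0 < t -> is_derive flat t (dflat t).
Proof.
intros Ht. unfold flat, dflat. auto_derive; [lra|].
replace (1 + - (5/16 * / t)) with (1 - 5/16 / t) by (unfold Rdiv; ring). field. lra.
Qed.

Lemma is_derive_dflat t : 0 < t -> is_derive dflat t (ddflat t).
Proof.
intros Ht. unfold dflat, ddflat. auto_derive; [lra|].
replace (1 + - (5/16 * / t)) with (1 - 5/16 / t) by (unfold Rdiv; ring). field. lra.
Qed.

Definition phi : R -> R := cutoff flat.
Definition dphi : R -> R := cutoff dflat.

Lemma is_derive_phi t : is_derive phi t (dphi t).
Proof.
apply (is_derive_cutoff _ _ Cphi); [apply is_derive_flat | apply flat_bounds].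
Qed.

Lemma dphi_lipschitz : lipschitz_on (fun _ => True) dphi Cphi.
Proof.
apply (lipschitz_of_derive_bound _ (cutoff ddflat)).
- intros t. apply (is_derive_cutoff _ _ Cphi); [apply is_derive_dflat | apply flat_bounds].
- intros t. unfold cutoff. destruct (Rlt_dec 0 t); [apply flat_bounds; lra|].
  rewrite Rabs_R0. pose proof Cphi_ge_16. lra.
Qed.

Lemma phi_le t : t <= 5/16 -> 0 <= phi t <= 5/16.
Proof.
intros Ht. unfold phi, cutoff, flat. destruct (Rlt_dec 0 t); [|lra].
assert (exp (1 - 5/16 / t) <= 1).
{ set (x := 1 - 5/16 / t). assert (x <= 0) by (assert (1 <= 5/16 / t) by (apply Rle_div_r; lra); unfold x; lra).
  assert (exp x * exp (- x) = 1) by (rewrite <- exp_plus, Rplus_opp_r; apply exp_0).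
  pose proof (exp_ineq1_le (- x)). pose proof (exp_pos x). nra. }
pose proof (exp_pos (1 - 5/16 / t)). lra.
Qed.

Lemma phi_5_16 :
  phi (5/16) = 5/16 /\ phi (-(5/16)) = 0 /\ dphi (5/16) = 1 /\ dphi (-(5/16)) = 0.
Proof.
unfold phi, dphi, cutoff, flat, dflat.
destruct (Rlt_dec 0 (5/16)); [|lra]. destruct (Rlt_dec 0 (-(5/16))); [lra|].
replace (1 - 5/16 / (5/16)) with 0 by field. rewrite exp_0.
repeat split; field.
Qed.

Definition bump (u : R) : R := 1/4 + phi (u - 1/2) - phi (1/2 - u).
Definition dbump (u : R) : R := dphi (u - 1/2) + dphi (1/2 - u).

Lemma is_derive_bump u : is_derive bump u (dbump u).
Proof.
unfold bump, dbump. auto_derive.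
- repeat split; eexists; apply is_derive_phi.
- rewrite !(is_derive_unique _ _ _ (is_derive_phi _)). unfold Rminus. ring.
Qed.

Lemma bump_ends :
  bump (3/16) = -1/16 /\ dbump (3/16) = 1 /\ bump (13/16) = 9/16 /\ dbump (13/16) = 1.
Proof.
unfold bump, dbump. destruct phi_5_16 as (P1 & P2 & P3 & P4).
replace (3/16 - 1/2) with (-(5/16)) by field. replace (1/2 - 3/16) with (5/16) by field.
replace (13/16 - 1/2) with (5/16) by field. replace (1/2 - 13/16) with (-(5/16)) by field.
rewrite P1, P2, P3, P4. repeat split; lra.
Qed.

(* [fpiece] for S_j = 0, m_j = 1, c_j = 0, with the outer affine branches
   extended to all of R (see [fpiece_profile]). *)
Definition profile (u : R) : R :=
  if Rlt_dec u (1/16) then - u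
  else if Rlt_dec u (3/16) then 8 * (u - 1/8) ^ 2 - 3/32
  else if Rlt_dec u (13/16) then bump u
  else if Rlt_dec u (15/16) then - 8 * (u - 7/8) ^ 2 + 19/32
  else - u + 3/2.

Definition dprofile (u : R) : R :=
  if Rlt_dec u (1/16) then -1
  else if Rlt_dec u (3/16) then 16 * (u - 1/8)
  else if Rlt_dec u (13/16) then dbump u
  else if Rlt_dec u (15/16) then - 16 * (u - 7/8)
  else -1.

Ltac decide_ifs := repeat destruct (Rlt_dec _ _); try lra.

Lemma is_derive_profile : forall u, is_derive profile u (dprofile u).
Proof.
destruct bump_ends as (B1 & B2 & B3 & B4).
unfold profile, dprofile.
apply (is_derive_if (fun v => - v)); [intros; auto_derive; auto | | decide_ifs | decide_ifs].
apply (is_derive_if (fun v => 8 * (v - 1/8) ^ 2 - 3/32));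
  [intros; auto_derive; auto; ring | | decide_ifs | decide_ifs].
apply (is_derive_if bump); [apply is_derive_bump | | decide_ifs | decide_ifs].
apply is_derive_if; intros; try auto_derive; auto.
- unfold Rminus. ring.
- field.
- field.
Qed.

Lemma dbump_lipschitz : lipschitz_on (fun _ => True) dbump (2 * Cphi).
Proof.
intros y z _ _. unfold dbump.
pose proof (dphi_lipschitz (y - 1/2) (z - 1/2) I I) as L1.
pose proof (dphi_lipschitz (1/2 - y) (1/2 - z) I I) as L2.
replace (y - 1/2 - (z - 1/2)) with (y - z) in L1 by ring.
replace (1/2 - y - (1/2 - z)) with (- (y - z)) in L2 by ring. rewrite Rabs_Ropp in L2.
replace (dphi (y - 1/2) + dphi (1/2 - y) - (dphi (z - 1/2) + dphi (1/2 - z)))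
  with ((dphi (y - 1/2) - dphi (z - 1/2)) + (dphi (1/2 - y) - dphi (1/2 - z))) by ring.
eapply Rle_trans; [apply Rabs_triang | lra].
Qed.

Lemma dprofile_lipschitz : lipschitz_on (fun _ => True) dprofile (2 * Cphi).
Proof.
destruct bump_ends as (B1 & B2 & B3 & B4). pose proof Cphi_ge_16.
assert (Lc : lipschitz_on (fun _ => True) (fun _ => -1) (2 * Cphi))
  by (apply lipschitz_on_const; lra).
assert (La : forall c a, Rabs c <= 16 -> lipschitz_on (fun _ => True) (fun v => c * (v - a)) (2 * Cphi))
  by (intros; apply lipschitz_on_affine; lra).
unfold dprofile.
apply lipschitz_on_if; [exact Lc | | decide_ifs].
apply lipschitz_on_if; [apply La; rewrite Rabs_right; lra | | decide_ifs].
apply lipschitz_on_if; [apply dbump_lipschitz | | decide_ifs].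
apply lipschitz_on_if; [apply La; rewrite Rabs_left; lra | exact Lc | field].
Qed.

Lemma profile_left u : u < 1/16 -> profile u = - u.
Proof. intros. unfold profile. decide_ifs. Qed.

Lemma profile_right u : 15/16 <= u -> profile u = 3/2 - u.
Proof. intros. unfold profile. decide_ifs. Qed.

Lemma dprofile_0 : dprofile 0 = -1.
Proof. unfold dprofile. decide_ifs. Qed.

Lemma profile_ge u : u <= 1 -> -1/8 <= profile u.
Proof.
intros Hu. unfold profile, bump. decide_ifs; try nra.
destruct (phi_le (u - 1/2)), (phi_le (1/2 - u)); lra.
Qed.

Lemma fpiece_profile Sj mj cj x : 0 < mj ->
  fpiece Sj mj cj x = cj + mj * profile ((x - Sj) / mj).
Proof.
intros Hm. set (u := (x - Sj) / mj).
replace x with (Sj + mj * u) by (unfold u; field; lra). clearbody u.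
unfold fpiece, profile, bump, phi, cutoff, flat.
repeat destruct (Rlt_dec _ _); repeat destruct (Req_EM_T _ _); try nra.
- field; lra.
- replace (5 * mj / 16 / (Sj + mj * u - Sj - mj / 2) + 1) with (1 - 5/16 / (1/2 - u))
    by (field; split; nra). field.
- replace (- (5 * mj / 16) / (Sj + mj * u - Sj - mj / 2) + 1) with (1 - 5/16 / (u - 1/2))
    by (field; split; nra). field.
- field; lra.
Qed.

Section Construction.

Variable m : nat -> R.
Hypothesis hpos : forall k, 0 < m k.

Definition Fpiece (j : nat) (y : R) : R :=
  Ssum m j / 2 + m j * profile ((y - Ssum m j) / m j).

Lemma Ssum_le a b : (a <= b)%nat -> Ssum m a <= Ssum m b.
Proof. induction 1 as [|b _ IH]; simpl; [lra|]. specialize (hpos b). lra. Qed.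

Lemma Ssum_nonneg j : 0 <= Ssum m j.
Proof. apply (Ssum_le 0). apply Nat.le_0_l. Qed.

Lemma Fpiece_Ssum_succ j : Fpiece j (Ssum m (S j)) = Ssum m (S j) / 2.
Proof.
unfold Fpiece. simpl. pose proof (hpos j).
replace ((Ssum m j + m j - Ssum m j) / m j) with 1 by (field; lra).
rewrite profile_right by lra. field.
Qed.

Lemma cseq_Ssum j : cseq m j = Ssum m j / 2.
Proof.
induction j as [|j IH]; simpl; [lra|].
unfold fj. rewrite fpiece_profile, IH by auto. apply Fpiece_Ssum_succ.
Qed.

Lemma Fbig_Fpiece j y : Ssum m j < y <= Ssum m (S j) -> Fbig m y = Fpiece j y.
Proof.
intros Hy. unfold Fbig. pose proof (Ssum_nonneg j).
destruct (Rle_dec y 0) as [|_]; [lra|]. cbv zeta.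
set (P := fun i => Ssum m i < y <= Ssum m (S i)).
assert (Hi : P (epsilon (inhabits O) P)) by (apply epsilon_spec; exists j; exact Hy).
set (i := epsilon (inhabits O) P) in *. clearbody i. unfold P in Hi.
assert (i = j) as ->.
{ destruct (Nat.lt_total i j) as [L|[E|L]]; auto.
  - pose proof (Ssum_le (S i) j L). lra.
  - pose proof (Ssum_le (S j) i L). lra. }
unfold fj, Fpiece. rewrite fpiece_profile, cseq_Ssum by auto. reflexivity.
Qed.

Lemma Fbig_nonpos y : y <= 0 -> Fbig m y = Fpiece 0 y.
Proof.
intros Hy. unfold Fbig, Fpiece. destruct (Rle_dec y 0) as [_|]; [|lra].
simpl. pose proof (hpos 0) as Hm.
rewrite profile_left; [field; lra|].
unfold Rdiv. pose proof (Rinv_0_lt_compat _ Hm). nra.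
Qed.

(* Both sides equal 3 S_{j+1}/2 - y. *)
Lemma Fpiece_succ j y : Ssum m (S j) - m j / 16 < y < Ssum m (S j) + m (S j) / 16 ->
  Fpiece j y = Fpiece (S j) y.
Proof.
intros Hy. unfold Fpiece. pose proof (hpos j) as Hm. pose proof (hpos (S j)) as Hm'.
replace (Ssum m (S j)) with (Ssum m j + m j) in * by reflexivity.
assert (15/16 <= (y - Ssum m j) / m j) by (apply (Rle_div_r _ _ (m j)); lra).
assert ((y - (Ssum m j + m j)) / m (S j) < 1/16) by (apply (Rlt_div_l _ _ (m (S j))); lra).
rewrite profile_right, profile_left by assumption. field. lra.
Qed.

Lemma Fbig_Fpiece_right j y : Ssum m j < y < Ssum m (S j) + m (S j) / 16 ->
  Fbig m y = Fpiece j y.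
Proof.
intros Hy. destruct (Rle_or_lt y (Ssum m (S j))).
- apply Fbig_Fpiece. lra.
- pose proof (hpos j). pose proof (hpos (S j)).
  rewrite (Fbig_Fpiece (S j)), (Fpiece_succ j y); simpl in *; [reflexivity | lra | lra].
Qed.

Definition in_piece (j : nat) (x : R) : Prop :=
  x <= Ssum m (S j) /\ (j = O \/ Ssum m j <= x).

Lemma Fbig_locally_Fpiece j x : in_piece j x -> locally x (fun y => Fpiece j y = Fbig m y).
Proof.
intros [Hr Hl]. pose proof (hpos (S j)).
destruct j as [|k].
- apply (locally_interval _ x m_infty (Ssum m 1 + m 1%nat / 16)); [exact I | simpl in *; lra |].
  intros y _ Hy. destruct (Rle_or_lt y 0).
  + symmetry. apply Fbig_nonpos. auto.
  + symmetry. apply Fbig_Fpiece_right. simpl in *. lra.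
- destruct Hl as [|Hl]; [discriminate|]. pose proof (hpos k).
  apply (locally_interval _ x (Ssum m (S k) - m k / 16) (Ssum m (S (S k)) + m (S (S k)) / 16));
    [simpl in *; lra | simpl in *; lra |].
  intros y Hy1 Hy2. simpl in Hy1, Hy2. destruct (Rle_or_lt y (Ssum m (S k))).
  + pose proof (hpos (S k)).
    rewrite (Fbig_Fpiece k y) by (simpl in *; lra).
    symmetry. apply Fpiece_succ. simpl in *. lra.
  + symmetry. apply Fbig_Fpiece_right. simpl in *. lra.
Qed.

Lemma Fbig_eq_Fpiece j x : in_piece j x -> Fbig m x = Fpiece j x.
Proof. intros Hx. symmetry. exact (locally_singleton _ _ (Fbig_locally_Fpiece j x Hx)). Qed.

Lemma is_derive_Fpiece j y : is_derive (Fpiece j) y (dprofile ((y - Ssum m j) / m j)).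
Proof.
unfold Fpiece. pose proof (hpos j). auto_derive.
- eexists. apply is_derive_profile.
- rewrite (is_derive_unique _ _ _ (is_derive_profile _)).
  replace ((y + - Ssum m j) * / m j) with ((y - Ssum m j) / m j) by (unfold Rdiv, Rminus; ring).
  field. lra.
Qed.

Lemma is_derive_Fbig j x : in_piece j x ->
  is_derive (Fbig m) x (dprofile ((x - Ssum m j) / m j)).
Proof.
intros Hx. apply (is_derive_ext_loc (Fpiece j)).
- apply Fbig_locally_Fpiece. exact Hx.
- apply is_derive_Fpiece.
Qed.

Lemma Derive_Fbig_lipschitz_piece j :
  lipschitz_on (in_piece j) (Derive (Fbig m)) (2 * Cphi / m j).
Proof.
intros y z Hy Hz. pose proof (hpos j).
rewrite (is_derive_unique _ _ _ (is_derive_Fbig j y Hy)),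
        (is_derive_unique _ _ _ (is_derive_Fbig j z Hz)).
eapply Rle_trans; [apply dprofile_lipschitz; exact I|].
replace ((y - Ssum m j) / m j - (z - Ssum m j) / m j) with ((y - z) / m j) by (field; lra).
unfold Rdiv. rewrite Rabs_mult, (Rabs_right (/ m j)) by (left; apply Rinv_0_lt_compat; lra).
right. ring.
Qed.

Lemma Derive_Fbig_lipschitz_below N :
  exists L, lipschitz_on (fun y => y <= Ssum m (S N)) (Derive (Fbig m)) L.
Proof.
induction N as [|N [L HL]].
- exists (2 * Cphi / m O).
  apply (lipschitz_on_weaken (in_piece O) _ _ (2 * Cphi / m O)).
  + intros y Hy. split; [exact Hy | left; reflexivity].
  + apply Rle_refl.
  + apply Derive_Fbig_lipschitz_piece.
- exists (Rmax L (2 * Cphi / m (S N))).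
  apply (lipschitz_on_weaken (fun y => y <= Ssum m (S N) \/ in_piece (S N) y) _ _
           (Rmax L (2 * Cphi / m (S N)))); [intros y Hy; unfold in_piece; lra | apply Rle_refl |].
  apply (lipschitz_on_glue _ _ _ _ (Ssum m (S N))).
  + intros y Hy. exact Hy.
  + intros z [_ [Hz|Hz]]; [discriminate | exact Hz].
  + apply Rle_refl.
  + split; [simpl; pose proof (hpos (S N)); lra | right; apply Rle_refl].
  + eapply lipschitz_on_weaken; [intros y Hy; exact Hy | apply Rmax_l | exact HL].
  + eapply lipschitz_on_weaken; [intros y Hy; exact Hy | apply Rmax_r |].
    apply Derive_Fbig_lipschitz_piece.
Qed.

Lemma Fbig_Ssum j : Fbig m (Ssum m j) = Ssum m j / 2.
Proof.
pose proof (hpos j).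
rewrite (Fbig_eq_Fpiece j) by (split; [simpl; lra | right; apply Rle_refl]).
unfold Fpiece. rewrite Rminus_diag, Rdiv_0_l, profile_left by lra. ring.
Qed.

Lemma is_derive_Fbig_Ssum j : is_derive (Fbig m) (Ssum m j) (-1).
Proof.
pose proof (hpos j). rewrite <- dprofile_0, <- (Rdiv_0_l (m j)), <- (Rminus_diag (Ssum m j)).
apply is_derive_Fbig. split; [simpl; lra | right; apply Rle_refl].
Qed.

Hypothesis hdiv : is_lim_seq (sum_n m) p_infty.

Lemma Ssum_unbounded M : exists N, M < Ssum m N.
Proof.
apply is_lim_seq_spec in hdiv. destruct (hdiv M) as [N HN].
exists (S N). specialize (HN N (Nat.le_refl N)).
replace (Ssum m (S N)) with (sum_n m N); [exact HN|].
clear HN. induction N as [|N IH]; [rewrite sum_O; simpl; ring|].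
rewrite sum_Sn, IH. reflexivity.
Qed.

Lemma exists_in_piece x : exists j, in_piece j x.
Proof.
destruct (Ssum_unbounded x) as [N HN].
assert (HSN : x <= Ssum m (S N)) by (simpl; pose proof (hpos N); lra).
clear HN. induction N as [|N IH].
- exists O. split; [exact HSN | left; reflexivity].
- destruct (Rle_or_lt x (Ssum m (S N))) as [Hx|Hx]; [exact (IH Hx)|].
  exists (S N). split; [exact HSN | right; lra].
Qed.

Lemma ex_derive_Fbig x : ex_derive (Fbig m) x.
Proof. destruct (exists_in_piece x) as [j Hj]. eexists. exact (is_derive_Fbig j x Hj). Qed.

Lemma Derive_Fbig_locally_lipschitz x : exists L,
  forall y z, Rabs (y - x) < 1 -> Rabs (z - x) < 1 ->
    Rabs (Derive (Fbig m) y - Derive (Fbig m) z) <= L * Rabs (y - z).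
Proof.
destruct (Ssum_unbounded (x + 1)) as [N HN].
destruct (Derive_Fbig_lipschitz_below N) as [L HL].
exists L. intros y z Hy Hz.
apply Rabs_def2 in Hy. apply Rabs_def2 in Hz.
pose proof (hpos N). simpl in HL.
apply HL; simpl; lra.
Qed.

Hypothesis hlim : is_lim_seq m 0.

Lemma Fbig_bounded_below : exists B, forall x, B <= Fbig m x.
Proof.
destruct (filterlim_bounded m (ex_intro _ 0 hlim)) as [M HM].
exists (- M / 8). intros x.
destruct (exists_in_piece x) as [j [Hr Hl]].
rewrite (Fbig_eq_Fpiece j) by (split; assumption). unfold Fpiece.
pose proof (hpos j). pose proof (Ssum_nonneg j).
assert (m j <= M) by (specialize (HM j); rewrite <- (Rabs_right (m j)) by lra; exact HM).
assert (-1/8 <= profile ((x - Ssum m j) / m j)).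
{ apply profile_ge. apply (Rle_div_l _ _ (m j)); [lra|]. simpl in Hr. lra. }
nra.
Qed.

End Construction.

Theorem proposition5p3 (m : nat -> R)
  (hpos : forall k, 0 < m k)
  (hdiv : is_lim_seq (sum_n m) p_infty)
  (hlim : is_lim_seq m 0) :
  (forall x, continuous (Fbig m) x) /\
  (forall x, ex_derive (Fbig m) x) /\
  (exists B : R, forall x, B <= Fbig m x) /\
  (forall x : R, exists delta : R, 0 < delta /\ exists L : R,
      forall y z : R, Rabs (y - x) < delta -> Rabs (z - x) < delta ->
        Rabs (Derive (Fbig m) y - Derive (Fbig m) z) <= L * Rabs (y - z)) /\
  (forall j : nat, Fbig m (Ssum m j) = Ssum m j / 2) /\
  (forall j : nat, is_derive (Fbig m) (Ssum m j) (-1)).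
Proof.
split; [|split; [|split; [|split; [|split]]]].
- intros x. apply (ex_derive_continuous (V := R_NormedModule)), ex_derive_Fbig; assumption.
- apply ex_derive_Fbig; assumption.
- apply Fbig_bounded_below; assumption.
- intros x. exists 1. split; [lra|]. apply Derive_Fbig_locally_lipschitz; assumption.
- intros j. apply Fbig_Ssum; assumption.
- intros j. apply is_derive_Fbig_Ssum; assumption.
Qed.
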